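(* For every positive integer $n$, $$\sum_{j=1}^{n}\csc^4\left(\frac{\pi(2j-1)}{4n}\right) = \frac{4n^2(2n^2+1)}{3}.$$ *)

From Stdlib Require Import Reals.
Open Scope R_scope.

Definition csc (x : R) : R := / sin x.

From Stdlib Require Import Reals Lra Lia.
Open Scope R_scope.

(* Let [D_m(x) = 1 + 2 sum_{t=1}^m cos (2 t x) = sin ((2m+1) x) / sin x] and
   [F_j = sum_{i<j} D_i = sin (j x)^2 / sin x^2].  At the nodes
   [x_k = pi (2k+1) / (4n)] we have [sin (2n x_k)^2 = 1], so [csc^2 x_k = F_{2n}(x_k)]
   and [csc^4 x_k = sum_{m<2n} csc^2 x_k D_m(x_k)].  Since [cos (2tx) = 1 - 2 sin (tx)^2]
   gives [csc^2 x cos (2 t x) = csc^2 x - 2 F_t(x)], every term is a combination of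
   [F]'s, whose node sums are computed from [sum_k cos (2 t x_k) = 0] for
   [0 < t < 2n] (a telescoping sum). *)

Fixpoint dirichlet (i : nat) (x : R) : R :=
  match i with
  | O => 1
  | S i' => dirichlet i' x + 2 * cos (2 * INR (S i') * x)
  end.

Fixpoint fejer (j : nat) (x : R) : R :=
  match j with
  | O => 0
  | S j' => fejer j' x + dirichlet j' x
  end.

Lemma sin_mul_dirichlet i x : sin x * dirichlet i x = sin ((2 * INR i + 1) * x).
Proof.
  induction i as [|i IH]; cbn [dirichlet].
  - simpl INR. rewrite Rmult_1_r. f_equal. ring.
  - rewrite Rmult_plus_distr_l, IH, S_INR.
    replace ((2 * (INR i + 1) + 1) * x) with (2 * (INR i + 1) * x + x) by ring.
    replace ((2 * INR i + 1) * x) with (2 * (INR i + 1) * x - x) by ring.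
    rewrite sin_plus, sin_minus. ring.
Qed.

Lemma sin_sqr_sub a b : sin a ^ 2 - sin b ^ 2 = sin (a + b) * sin (a - b).
Proof.
  pose proof (sin2_cos2 a) as Ea. pose proof (sin2_cos2 b) as Eb.
  unfold Rsqr in Ea, Eb. rewrite sin_plus, sin_minus.
  transitivity (sin a ^ 2 * (sin b * sin b + cos b * cos b)
                - sin b ^ 2 * (sin a * sin a + cos a * cos a)).
  - rewrite Ea, Eb. ring.
  - ring.
Qed.

Lemma sin_sqr_eq_fejer j x : sin (INR j * x) ^ 2 = sin x ^ 2 * fejer j x.
Proof.
  induction j as [|j IH]; cbn [fejer].
  - simpl INR. rewrite Rmult_0_l, sin_0. ring.
  - assert (step : sin (INR (S j) * x) ^ 2 - sin (INR j * x) ^ 2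
                   = sin x ^ 2 * dirichlet j x).
    { rewrite sin_sqr_sub, S_INR.
      replace ((INR j + 1) * x + INR j * x) with ((2 * INR j + 1) * x) by ring.
      replace ((INR j + 1) * x - INR j * x) with x by ring.
      rewrite <- sin_mul_dirichlet. ring. }
    rewrite Rmult_plus_distr_l, <- IH, <- step. ring.
Qed.

Lemma csc_sqr_mul_cos t x : sin x <> 0 ->
  csc x ^ 2 * cos (2 * INR t * x) = csc x ^ 2 - 2 * fejer t x.
Proof.
  intro sin_x_neq0. unfold csc.
  replace (2 * INR t * x) with (2 * (INR t * x)) by ring.
  rewrite cos_2a_sin.
  replace (1 - 2 * sin (INR t * x) * sin (INR t * x))
    with (1 - 2 * sin (INR t * x) ^ 2) by ring.
  rewrite sin_sqr_eq_fejer. field. exact sin_x_neq0.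
Qed.

Lemma sum_f_R0_telescope (f : nat -> R) N :
  sum_f_R0 (fun k => f (S k) - f k) N = f (S N) - f O.
Proof. induction N as [|N IH]; simpl; [|rewrite IH]; ring. Qed.

Section Nodes.

Variable n : nat.
Hypothesis n_pos : (1 <= n)%nat.

Definition node (k : nat) : R := PI * (2 * INR k + 1) / (4 * INR n).

Definition node_sum (f : R -> R) : R := sum_f_R0 (fun k => f (node k)) (n - 1).

Lemma INR_n_gt0 : 0 < INR n.
Proof. apply lt_0_INR. lia. Qed.

Lemma node_sum_plus f g : node_sum (fun x => f x + g x) = node_sum f + node_sum g.
Proof. apply sum_plus. Qed.

Lemma node_sum_minus f g : node_sum (fun x => f x - g x) = node_sum f - node_sum g.
Proof. apply minus_sum. Qed.

Lemma node_sum_scal c f : node_sum (fun x => c * f x) = c * node_sum f.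
Proof. unfold node_sum. rewrite scal_sum. apply sum_eq. intros. ring. Qed.

Lemma node_sum_const c : node_sum (fun _ => c) = INR n * c.
Proof.
  unfold node_sum. rewrite sum_cte. replace (S (n - 1)) with n by lia. ring.
Qed.

Lemma node_sum_ext f g :
  (forall k, (k < n)%nat -> f (node k) = g (node k)) -> node_sum f = node_sum g.
Proof. intro fg. apply sum_eq. intros k k_le. apply fg. lia. Qed.

Lemma node_sum_cos t : (0 < t < 2 * n)%nat ->
  node_sum (fun x => cos (2 * INR t * x)) = 0.
Proof.
  intro t_bounds. pose proof INR_n_gt0. pose proof PI_RGT_0.
  assert (t_ge1 : 1 <= INR t) by (apply (le_INR 1); lia).
  assert (t_lt : INR t < 2 * INR n).
  { replace 2 with (INR 2) by reflexivity. rewrite <- mult_INR. apply lt_INR. lia. }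
  set (a := INR t * PI / (2 * INR n)).
  assert (sin_a_neq0 : sin a <> 0).
  { apply Rgt_not_eq, sin_gt_0; unfold a.
    - apply Rdiv_lt_0_compat; nra.
    - apply Rmult_lt_reg_r with (2 * INR n); [lra|].
      unfold Rdiv. rewrite Rmult_assoc, Rinv_l by lra. nra. }
  (* [2 sin a cos ((2k+1) a) = sin ((2k+2) a) - sin (2k a)] telescopes to [sin (t pi)]. *)
  assert (telescoped : 2 * sin a * node_sum (fun x => cos (2 * INR t * x)) = 0).
  { unfold node_sum. rewrite scal_sum.
    rewrite (sum_eq _ (fun k => sin (2 * a * INR (S k)) - sin (2 * a * INR k))).
    - rewrite (sum_f_R0_telescope (fun k => sin (2 * a * INR k))).
      replace (S (n - 1)) with n by lia.
      simpl INR. rewrite Rmult_0_r, sin_0, sin_eq_0_1; [ring|].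
      exists (Z.of_nat t). rewrite <- INR_IZR_INZ. unfold a. field. lra.
    - intros k _. unfold node. rewrite S_INR.
      replace (2 * INR t * (PI * (2 * INR k + 1) / (4 * INR n))) with (2 * a * INR k + a)
        by (unfold a; field; lra).
      replace (2 * a * (INR k + 1)) with ((2 * a * INR k + a) + a) by ring.
      replace (2 * a * INR k) with ((2 * a * INR k + a) - a) at 3 by ring.
      rewrite sin_plus, sin_minus. ring. }
  apply Rmult_integral in telescoped as [contra|]; [|assumption].
  exfalso. apply sin_a_neq0. lra.
Qed.

Lemma node_sum_dirichlet i : (i < 2 * n)%nat -> node_sum (dirichlet i) = INR n.
Proof.
  induction i as [|i IH]; intro i_lt.
  - unfold dirichlet. rewrite node_sum_const. ring.
  - change (dirichlet (S i)) with (fun x => dirichlet i x + 2 * cos (2 * INR (S i) * x)).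
    rewrite node_sum_plus, node_sum_scal, node_sum_cos, IH by lia. ring.
Qed.

Lemma node_sum_fejer j : (j <= 2 * n)%nat -> node_sum (fejer j) = INR n * INR j.
Proof.
  induction j as [|j IH]; intro j_le.
  - unfold fejer. rewrite node_sum_const. simpl. ring.
  - change (fejer (S j)) with (fun x => fejer j x + dirichlet j x).
    rewrite node_sum_plus, node_sum_dirichlet, IH, S_INR by lia. ring.
Qed.

Lemma sin_node_neq0 k : (k < n)%nat -> sin (node k) <> 0.
Proof.
  intro k_lt. pose proof INR_n_gt0. pose proof PI_RGT_0. pose proof (pos_INR k).
  assert (k_lt' : INR k + 1 <= INR n) by (rewrite <- S_INR; apply le_INR; lia).
  apply Rgt_not_eq, sin_gt_0; unfold node.
  - apply Rdiv_lt_0_compat; nra.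
  - apply Rmult_lt_reg_r with (4 * INR n); [lra|].
    unfold Rdiv. rewrite Rmult_assoc, Rinv_l by lra. nra.
Qed.

Lemma sin_sqr_mul_node k : sin (INR (2 * n) * node k) ^ 2 = 1.
Proof.
  pose proof INR_n_gt0.
  rewrite mult_INR. simpl (INR 2).
  replace ((1 + 1) * INR n * node k) with (INR k * PI + PI / 2)
    by (unfold node; field; lra).
  rewrite sin_plus, sin_PI2, cos_PI2.
  pose proof (sin2_cos2 (INR k * PI)) as E. unfold Rsqr in E.
  rewrite sin_eq_0_1 in E by (exists (Z.of_nat k); rewrite <- INR_IZR_INZ; reflexivity).
  lra.
Qed.

Lemma csc_sqr_node k : (k < n)%nat -> csc (node k) ^ 2 = fejer (2 * n) (node k).
Proof.
  intro k_lt. pose proof (sin_node_neq0 k k_lt) as sin_neq0.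
  pose proof (sin_sqr_mul_node k) as E. rewrite sin_sqr_eq_fejer in E.
  unfold csc. apply (Rmult_eq_reg_l (sin (node k) ^ 2)).
  - rewrite E. field. exact sin_neq0.
  - apply pow_nonzero. exact sin_neq0.
Qed.

Lemma node_sum_csc_sqr : node_sum (fun x => csc x ^ 2) = 2 * INR n ^ 2.
Proof.
  rewrite (node_sum_ext _ (fejer (2 * n))) by exact csc_sqr_node.
  rewrite node_sum_fejer, mult_INR by lia. simpl. ring.
Qed.

Lemma node_sum_csc_sqr_dirichlet m : (m < 2 * n)%nat ->
  node_sum (fun x => csc x ^ 2 * dirichlet m x)
  = 2 * INR n ^ 2 * (2 * INR m + 1) - 2 * INR n * INR m * (INR m + 1).
Proof.
  induction m as [|m IH]; intro m_lt.
  - cbn [dirichlet]. rewrite (node_sum_ext _ (fun x => csc x ^ 2)).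
    + rewrite node_sum_csc_sqr. simpl. ring.
    + intros. ring.
  - rewrite (node_sum_ext _ (fun x => csc x ^ 2 * dirichlet m x
                                      + 2 * (csc x ^ 2 - 2 * fejer (S m) x))).
    + rewrite node_sum_plus, node_sum_scal, node_sum_minus, node_sum_scal,
        node_sum_csc_sqr, node_sum_fejer, IH, S_INR by lia. ring.
    + intros k k_lt. cbn [dirichlet].
      rewrite <- csc_sqr_mul_cos by (apply sin_node_neq0; exact k_lt). ring.
Qed.

Lemma node_sum_csc_sqr_fejer j : (j <= 2 * n)%nat ->
  node_sum (fun x => csc x ^ 2 * fejer j x)
  = 2 * INR n ^ 2 * INR j ^ 2 - 2 * INR n * (INR j - 1) * INR j * (INR j + 1) / 3.
Proof.
  induction j as [|j IH]; intro j_le.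
  - cbn [fejer]. rewrite (node_sum_ext _ (fun _ => 0)) by (intros; ring).
    rewrite node_sum_const. simpl. field.
  - cbn [fejer].
    rewrite (node_sum_ext _ (fun x => csc x ^ 2 * fejer j x + csc x ^ 2 * dirichlet j x))
      by (intros; ring).
    rewrite node_sum_plus, node_sum_csc_sqr_dirichlet, IH, S_INR by lia. field.
Qed.

End Nodes.

Theorem mainTheorem15 (n : nat) (hn : (1 <= n)%nat) :
  sum_f_R0 (fun k => (csc (PI * (2 * INR k + 1) / (4 * INR n))) ^ 4) (n - 1)
  = 4 * (INR n)^2 * (2 * (INR n)^2 + 1) / 3.
Proof.
  change (node_sum n (fun x => csc x ^ 4) = 4 * INR n ^ 2 * (2 * INR n ^ 2 + 1) / 3).
  rewrite (node_sum_ext n hn _ (fun x => csc x ^ 2 * fejer (2 * n) x)).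
  - rewrite node_sum_csc_sqr_fejer, mult_INR by lia. simpl (INR 2). field.
  - intros k k_lt. rewrite <- csc_sqr_node by assumption. ring.
Qed.
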